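(* Suppose UE $j$ decodes $x_{B1}$ first ($j\overset{(1)}{\to}x_{B1}$), while UE $i$ does not decode $x_{A1}$ first. Then the rate region $\mathcal{R}_{3}(\mathcal{P}_{3})\cup\mathcal{R}_{4}(\mathcal{P}_{4})$ is achievable, where $$\mathcal{R}_{3}(\mathcal{P}_{3})=\bigcup_{\mathbf{p}\in\mathcal{P}_{3}}\Big\{\mathbf{r}\in\mathbb{R}_+^4\;\Big|\; r_{i,s}\le C\Big(\tfrac{p_{i,s}}{\alpha_{i}}\Big)\ (s=1,2),\; r_{i,1}+r_{i,2}\le C\Big(\tfrac{p_{i,1}+p_{i,2}}{\alpha_{i}}\Big),\; r_{j,1}\le C\Big(\tfrac{p_{j,1}}{p_{i,2}+p_{j,2}+\alpha_{j}}\Big),\; r_{j,2}\le C\Big(\tfrac{p_{j,2}}{p_{i,2}+\alpha_{j}}\Big)\Big\},$$ $$\mathcal{R}_{4}(\mathcal{P}_{4})=\bigcup_{\mathbf{p}\in\mathcal{P}_{4}}\Big\{\mathbf{r}\in\mathbb{R}_+^4\;\Big|\; r_{i,1}\le C\Big(\tfrac{p_{i,1}}{p_{j,2}+\alpha_{i}}\Big),\; r_{i,2}\le C\Big(\tfrac{p_{i,2}}{p_{i,1}+p_{j,2}+\alpha_{i}}\Big),\; r_{j,1}\le C\Big(\tfrac{p_{j,1}}{p_{i,2}+p_{j,2}+\alpha_{j}}\Big),\; r_{j,2}\le C\Big(\tfrac{p_{j,2}}{\alpha_{j}}\Big)\Big\},$$ with $\mathcal{P}_{3}=\{\mathbf{p}\in\mathcal{P}\mid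 p_{i,1}<\alpha_{j}-\alpha_{i}\}$ and $\mathcal{P}_{4}=\mathcal{P}\setminus\mathcal{P}_{3}$. The region $\mathcal{R}_{3}(\mathcal{P}_{3})$ is achieved by the decoding orders $i\overset{(1)}{\to}x_{B2}\overset{(2)}{\to}(x_{A1},x_{A2})$ and $j\overset{(1)}{\to}x_{B1}\overset{(2)}{\to}x_{B2}$; the region $\mathcal{R}_{4}(\mathcal{P}_{4})$ is achieved by the decoding orders $i\overset{(1)}{\to}x_{A2}\overset{(2)}{\to}x_{A1}$ and $j\overset{(1)}{\to}x_{B1}\overset{(2)}{\to}x_{A2}\overset{(3)}{\to}x_{B2}$.
   Context: Two-user downlink with a single-antenna base station (BS) and user equipments UE $i$ and UE $j$. UE $i$ requests file $W_A$ and UE $j$ requests file $W_B$; each file $W_f$ is split into subfiles, and the BS transmits four independent unit-power Gaussian codewords $x_{A1},x_{A2}$ (intended for UE $i$) and $x_{B1},x_{B2}$ (intended for UE $j$) with transmit powers $p_{i,1},p_{i,2},p_{j,1},p_{j,2}\ge 0$, i.e. $x=\sqrt{p_{i,1}}x_{A1}+\sqrt{p_{i,2}}x_{A2}+\sqrt{p_{j,1}}x_{B1}+\sqrt{p_{j,2}}x_{B2}$. Power vector $\mathbf{p}=(p_{i,1},p_{i,2},p_{j,1},p_{j,2})$, feasible set $\mathcal{P}=\{\mathbf{p}\in\mathbb{R}_+^4\mid p_{i,1}+p_{i,2}+p_{j,1}+p_{j,2}\le P\}$ for a total power budget $P>0$. UE $k$ receives $y_k=h_kx+z_k$ with $z_k\sim\mathcal{CN}(0,\sigma_k^2)$;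 the effective noise variance is $\alpha_k=\sigma_k^2/|h_k|^2$, and it is assumed $0<\alpha_i<\alpha_j$. Because UE $j$ has cached the data carried by $x_{A1}$ and UE $i$ has cached the data carried by $x_{B1}$, these are removed by cache-enabled interference cancellation, so the effective received signals (after normalizing by $h_k$) are: at UE $i$, $\sqrt{p_{i,1}}x_{A1}+\sqrt{p_{i,2}}x_{A2}+\sqrt{p_{j,2}}x_{B2}$ plus Gaussian noise of variance $\alpha_i$; at UE $j$, $\sqrt{p_{i,2}}x_{A2}+\sqrt{p_{j,1}}x_{B1}+\sqrt{p_{j,2}}x_{B2}$ plus Gaussian noise of variance $\alpha_j$. $C(\Gamma)=\log_2(1+\Gamma)$. Rate vector $\mathbf{r}=(r_{i,1},r_{i,2},r_{j,1},r_{j,2})$, where $r_{i,s}$ is the rate of $x_{As}$ and $r_{j,s}$ the rate of $x_{Bs}$. Receivers perform successive interference cancellation (SIC): signals are decoded in steps, each decoded signal being subtracted before later steps and undecoded signals treated as Gaussian noise; several signals may be jointly decoded in one step (multiple-access decoding). A signal intended for the other user may be decoded and cancelled only if its rate is supported at that decoding step at the decoding user. Notation: $k\overset{(n)}{\to}x_f$ means $x_f$ is the $n$-th decoded signal at UE $k$; $k\overset{(n)}{\to}(x_f,x_{f'})$ means $x_f,x_{f'}$ are jointly decoded in the $n$-th step. A rate vector is achievable if there is a power vector in the indicated set and decoding orders under which all intended signals (and all cancelled interfering signals) are decoded reliably at those rates. *)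

From Stdlib Require Import Reals Lra List.
Import ListNotations.
Open Scope R_scope.

Definition Cap (g : R) : R := ln (1 + g) / ln 2.

Inductive sig := A1 | A2 | B1 | B2.

Definition sig_eqb (f g : sig) : bool :=
  match f, g with
  | A1, A1 | A2, A2 | B1, B1 | B2, B2 => true
  | _, _ => false
  end.

Definition memb (f : sig) (s : list sig) : bool := existsb (sig_eqb f) s.

Inductive ue := UEi | UEj.

Definition alpha (ai aj : R) (k : ue) : R :=
  match k with UEi => ai | UEj => aj end.

(** Signals present at UE k after cache-enabled interference cancellation. *)
Definition present (k : ue) : list sig :=
  match k with UEi => [A1; A2; B2] | UEj => [A2; B1; B2] end.

Definition intended (k : ue) : list sig :=
  match k with UEi => [A1; A2] | UEj => [B1; B2] end.

(** Power vector p and rate vector r are indexed by the signals: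
    p A1 = p_{i,1}, p A2 = p_{i,2}, p B1 = p_{j,1}, p B2 = p_{j,2},
    and likewise for r. *)
Definition sumf (x : sig -> R) (s : list sig) : R :=
  fold_right (fun f acc => x f + acc) 0 s.

Definition in_P (P : R) (p : sig -> R) : Prop :=
  0 <= p A1 /\ 0 <= p A2 /\ 0 <= p B1 /\ 0 <= p B2 /\
  p A1 + p A2 + p B1 + p B2 <= P.

Definition in_P3 (ai aj P : R) (p : sig -> R) : Prop :=
  in_P P p /\ p A1 < aj - ai.

Definition in_P4 (ai aj P : R) (p : sig -> R) : Prop :=
  in_P P p /\ ~ (p A1 < aj - ai).

(** A decoding order (SIC schedule) at a UE is a list of steps; each step is
    a nonempty list of signals decoded jointly (multiple-access decoding). *)
Definition valid_order (k : ue) (o : list (list sig)) : Prop :=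
  (forall St, In St o -> St <> []) /\
  (forall f, In f (concat o) -> In f (present k)) /\
  NoDup (concat o) /\
  (forall f, In f (intended k) -> In f (concat o)).

(** Reliability of the SIC decoding: at each step, with [undec] the signals
    not yet decoded before the step and [undec'] those still undecoded after
    it (treated as Gaussian noise), every nonempty subset T of the jointly
    decoded signals S satisfies the MAC constraint
    sum_{f in T} r_f <= C( sum_{f in T} p_f / (sum_{g in undec'} p_g + alpha_k) ). *)
Fixpoint sic_ok (ak : R) (p r : sig -> R) (undec : list sig)
    (o : list (list sig)) : Prop :=
  match o with
  | [] => True
  | St :: rest =>
      let undec' := filter (fun f => negb (memb f St)) undec in
      (forall T, incl T St -> NoDup T -> T <> [] ->
          sumf r T <= Cap (sumf p T / (sumf p undec' + ak))) /\
      sic_ok ak p r undec' rest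
  end.

Definition achieved_by (ai aj : R) (Pset : (sig -> R) -> Prop)
    (oi oj : list (list sig)) (r : sig -> R) : Prop :=
  exists p, Pset p /\
    valid_order UEi oi /\ valid_order UEj oj /\
    sic_ok (alpha ai aj UEi) p r (present UEi) oi /\
    sic_ok (alpha ai aj UEj) p r (present UEj) oj.

Definition case_prop2 (oi oj : list (list sig)) : Prop :=
  head oj = Some [B1] /\ ~ (exists St, head oi = Some St /\ In A1 St).

Definition rate_nonneg (r : sig -> R) : Prop :=
  0 <= r A1 /\ 0 <= r A2 /\ 0 <= r B1 /\ 0 <= r B2.

Definition in_R3 (ai aj P : R) (r : sig -> R) : Prop :=
  rate_nonneg r /\ exists p, in_P3 ai aj P p /\
    r A1 <= Cap (p A1 / ai) /\
    r A2 <= Cap (p A2 / ai) /\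
    r A1 + r A2 <= Cap ((p A1 + p A2) / ai) /\
    r B1 <= Cap (p B1 / (p A2 + p B2 + aj)) /\
    r B2 <= Cap (p B2 / (p A2 + aj)).

Definition in_R4 (ai aj P : R) (r : sig -> R) : Prop :=
  rate_nonneg r /\ exists p, in_P4 ai aj P p /\
    r A1 <= Cap (p A1 / (p B2 + ai)) /\
    r A2 <= Cap (p A2 / (p A1 + p B2 + ai)) /\
    r B1 <= Cap (p B1 / (p A2 + p B2 + aj)) /\
    r B2 <= Cap (p B2 / aj).

Definition order3_i : list (list sig) := [[B2]; [A1; A2]].
Definition order3_j : list (list sig) := [[B1]; [B2]].
Definition order4_i : list (list sig) := [[A2]; [A1]].
Definition order4_j : list (list sig) := [[B1]; [A2]; [B2]].

(* Proof: with the given power allocation, each SIC step only has to beat the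
   capacity bound defining the region, degraded by the signals still undecoded.
   The only nontrivial comparisons are where UE i decodes x_B2 under the noise
   [p_{i,1} + p_{i,2} + alpha_i] (region 3) and UE j decodes x_A2 under the
   noise [p_{j,2} + alpha_j] (region 4): they are no worse than the region's
   bounds exactly because [p_{i,1} < alpha_j - alpha_i] on P_3 and
   [alpha_j - alpha_i <= p_{i,1}] on P_4. *)
From Stdlib Require Import Reals Lra List.
Import ListNotations.
Open Scope R_scope.

Lemma Cap_le x y : 0 <= x -> x <= y -> Cap x <= Cap y.
Proof.
  intros Hx Hxy; unfold Cap, Rdiv.
  assert (Hln2 : 0 < ln 2) by (pose proof ln_lt_2; lra).
  apply Rmult_le_compat_r; [left; apply Rinv_0_lt_compat; lra |].
  destruct (Req_dec x y) as [-> | Hne]; [lra |].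
  left; apply ln_increasing; lra.
Qed.

Lemma Rdiv_le_compat a1 a2 d1 d2 :
  0 <= a1 -> a1 <= a2 -> 0 < d2 -> d2 <= d1 -> a1 / d1 <= a2 / d2.
Proof.
  intros Ha1 Ha Hd2 Hd; unfold Rdiv.
  apply Rmult_le_compat; try lra.
  - left; apply Rinv_0_lt_compat; lra.
  - apply Rinv_le_contravar; lra.
Qed.

Lemma Rle_Cap_trans x a1 a2 d1 d2 :
  x <= Cap (a1 / d1) -> 0 <= a1 -> a1 <= a2 -> 0 < d2 -> d2 <= d1 ->
  x <= Cap (a2 / d2).
Proof.
  intros Hx Ha1 Ha Hd2 Hd.
  apply Rle_trans with (1 := Hx), Cap_le.
  - unfold Rdiv; apply Rmult_le_pos; [lra | left; apply Rinv_0_lt_compat; lra].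
  - now apply Rdiv_le_compat.
Qed.

Lemma incl_singleton_NoDup {A} (a : A) T :
  incl T [a] -> NoDup T -> T <> [] -> T = [a].
Proof.
  intros Hincl Hnd Hne.
  assert (Ha : forall z, In z T -> z = a) by (intros z Hz; now destruct (Hincl z Hz)).
  destruct T as [| x [| y T]]; [congruence | f_equal; apply Ha; now left |].
  exfalso; inversion_clear Hnd as [| ? ? Hx _]; apply Hx.
  rewrite (Ha x), (Ha y); simpl; auto.
Qed.

Lemma incl_pair_NoDup {A} (a b : A) T :
  incl T [a; b] -> NoDup T -> T <> [] ->
  T = [a] \/ T = [b] \/ T = [a; b] \/ T = [b; a].
Proof.
  intros Hincl Hnd Hne.
  assert (Hab : forall z, In z T -> z = a \/ z = b).
  { intros z Hz; destruct (Hincl z Hz) as [<- | [<- | []]]; auto. }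
  destruct T as [| x [| y [| z T]]]; [congruence | | |].
  - destruct (Hab x) as [-> | ->]; simpl; auto.
  - inversion_clear Hnd as [| ? ? Hx _].
    destruct (Hab x) as [-> | ->], (Hab y) as [-> | ->]; simpl; auto;
      exfalso; apply Hx; now left.
  - exfalso; inversion_clear Hnd as [| ? ? Hx Hnd']; inversion_clear Hnd' as [| ? ? Hy _].
    destruct (Hab x) as [-> | ->], (Hab y) as [-> | ->], (Hab z) as [-> | ->];
      simpl in *; tauto.
Qed.

Section SicSteps.

Variables (ak : R) (p r : sig -> R) (undec : list sig) (rest : list (list sig)).

Lemma sic_ok_single a :
  let noise := sumf p (filter (fun f => negb (memb f [a])) undec) + ak in
  r a <= Cap (p a / noise) ->
  sic_ok ak p r (filter (fun f => negb (memb f [a])) undec) rest ->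
  sic_ok ak p r undec ([a] :: rest).
Proof.
  intros noise Ha Hrest; split; [| exact Hrest].
  intros T Hincl Hnd Hne; rewrite (incl_singleton_NoDup a T Hincl Hnd Hne); simpl.
  now rewrite !Rplus_0_r.
Qed.

Lemma sic_ok_pair a b :
  let noise := sumf p (filter (fun f => negb (memb f [a; b])) undec) + ak in
  r a <= Cap (p a / noise) ->
  r b <= Cap (p b / noise) ->
  r a + r b <= Cap ((p a + p b) / noise) ->
  sic_ok ak p r (filter (fun f => negb (memb f [a; b])) undec) rest ->
  sic_ok ak p r undec ([a; b] :: rest).
Proof.
  intros noise Ha Hb Hab Hrest; split; [| exact Hrest].
  intros T Hincl Hnd Hne.
  destruct (incl_pair_NoDup a b T Hincl Hnd Hne) as [-> | [-> | [-> | ->]]]; simpl;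
    rewrite ?Rplus_0_r; [exact Ha | exact Hb | exact Hab |].
  now rewrite Rplus_comm, (Rplus_comm (p b)).
Qed.

End SicSteps.

Ltac prove_valid_order :=
  repeat split;
  [ intros St HSt; simpl in HSt; intuition; subst; discriminate
  | intros f Hf; simpl in *; tauto
  | simpl; repeat constructor; simpl; intuition discriminate
  | intros f Hf; simpl in *; tauto ].

Lemma valid_order3_i : valid_order UEi order3_i. Proof. prove_valid_order. Qed.
Lemma valid_order3_j : valid_order UEj order3_j. Proof. prove_valid_order. Qed.
Lemma valid_order4_i : valid_order UEi order4_i. Proof. prove_valid_order. Qed.
Lemma valid_order4_j : valid_order UEj order4_j. Proof. prove_valid_order. Qed.

Lemma case_prop2_order3 : case_prop2 order3_i order3_j.
Proof.
  split; [reflexivity |]; intros [St [[= <-] HA1]]; simpl in HA1; intuition discriminate.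
Qed.

Lemma case_prop2_order4 : case_prop2 order4_i order4_j.
Proof.
  split; [reflexivity |]; intros [St [[= <-] HA1]]; simpl in HA1; intuition discriminate.
Qed.

Lemma achieved_by_mono ai aj (Pset Pset' : (sig -> R) -> Prop) oi oj r :
  (forall p, Pset p -> Pset' p) ->
  achieved_by ai aj Pset oi oj r -> achieved_by ai aj Pset' oi oj r.
Proof. intros HP [p [Hp Hrest]]; exists p; auto. Qed.

Section Achievability.

Variables (ai aj P : R) (r : sig -> R).
Hypotheses (Hai : 0 < ai) (Hij : ai < aj).

Ltac close_Cap H := simpl; eapply Rle_Cap_trans; [exact H | lra ..].

Lemma R3_achieved_by_order3 :
  in_R3 ai aj P r -> achieved_by ai aj (in_P3 ai aj P) order3_i order3_j r.
Proof.
  intros [_ [p [HP3 (HA1 & HA2 & HA12 & HB1 & HB2)]]].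
  exists p; split; [exact HP3 |].
  destruct HP3 as [(? & ? & ? & ? & _) Hsmall].
  split; [exact valid_order3_i |]; split; [exact valid_order3_j |]; split.
  - apply sic_ok_single; [close_Cap HB2 |].
    apply sic_ok_pair; [close_Cap HA1 | close_Cap HA2 | close_Cap HA12 | exact I].
  - apply sic_ok_single; [close_Cap HB1 |].
    apply sic_ok_single; [close_Cap HB2 | exact I].
Qed.

Lemma R4_achieved_by_order4 :
  in_R4 ai aj P r -> achieved_by ai aj (in_P4 ai aj P) order4_i order4_j r.
Proof.
  intros [_ [p [HP4 (HA1 & HA2 & HB1 & HB2)]]].
  exists p; split; [exact HP4 |].
  destruct HP4 as [(? & ? & ? & ? & _) Hlarge].
  split; [exact valid_order4_i |]; split; [exact valid_order4_j |]; split.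
  - apply sic_ok_single; [close_Cap HA2 |].
    apply sic_ok_single; [close_Cap HA1 | exact I].
  - apply sic_ok_single; [close_Cap HB1 |].
    apply sic_ok_single; [close_Cap HA2 |].
    apply sic_ok_single; [close_Cap HB2 | exact I].
Qed.

End Achievability.

Theorem proposition2 (ai aj P : R) (Hai : 0 < ai) (Hij : ai < aj) (HP : 0 < P)
    (r : sig -> R) :
  (in_R3 ai aj P r -> achieved_by ai aj (in_P3 ai aj P) order3_i order3_j r) /\
  (in_R4 ai aj P r -> achieved_by ai aj (in_P4 ai aj P) order4_i order4_j r) /\
  (in_R3 ai aj P r \/ in_R4 ai aj P r ->
     exists oi oj, case_prop2 oi oj /\ achieved_by ai aj (in_P P) oi oj r).
Proof.
  pose proof (R3_achieved_by_order3 ai aj P r Hai Hij) as H3.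
  pose proof (R4_achieved_by_order4 ai aj P r Hai Hij) as H4.
  split; [exact H3 |]; split; [exact H4 |].
  intros [HR3 | HR4].
  - exists order3_i, order3_j; split; [exact case_prop2_order3 |].
    apply achieved_by_mono with (2 := H3 HR3); now intros p [].
  - exists order4_i, order4_j; split; [exact case_prop2_order4 |].
    apply achieved_by_mono with (2 := H4 HR4); now intros p [].
Qed.
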